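(* The first-order theory $T_{\mathrm{as\text{-}irr}}$ is $\aleph_0$-categorical, has no finite models, and is therefore complete.
   Context: $T_{\mathrm{as\text{-}irr}}$ is the first-order theory in the language with one binary relation $<$ consisting of: $\forall x\,\neg(x<x)$; $\forall x,y,z((x<y\wedge y<z)\rightarrow x<z)$; (Depth-at-least-3) $\exists x_0,x_1,x_2(x_0<x_1\wedge x_1<x_2)$; (Depth-at-most-3) $\neg\exists x_0,x_1,x_2,x_3(x_0<x_1\wedge x_1<x_2\wedge x_2<x_3)$; and the following extension axioms, where $L_1$ is the (first-order definable) set of minimal elements, $L_2$ the set of elements immediately succeeding (covering) an element of $L_1$, and $L_3$ the set of elements immediately succeeding an element of $L_2$: (a) for all $j,k,l\ge0$: for all distinct $x_0,\dots,x_{k-1},y_0,\dots,y_{j-1}\in L_2$ and distinct $z_0,\dots,z_{l-1}\in L_1$ there is $z\in L_1$ different from all $z_i$ with $\bigwedge_{i<k}z<x_i\wedge\bigwedge_{i<j}\neg(z<y_i)$; (b) for all $j,k,l\ge0$: for all distinct $x_0,\dots,x_{k-1},y_0,\dots,y_{j-1}\in L_2$ and distinct $z_0,\dots,z_{l-1}\in L_3$ there is $z\in L_3$ different from all $z_i$ with $\bigwedge_{i<k}x_i<z\wedge\bigwedge_{i<j}\neg(y_i<z)$; (c) for all $j,j',k,k',l\ge0$: for all distinct $x_0,\dots,x_{k-1},y_0,\dots,y_{j-1}\in L_1$, distinct $x'_0,\dots,x'_{k'-1},y'_0,\dots,y'_{j'-1}\in L_3$ and distinct $z_0,\dots,z_{l-1}\in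 L_2$ there is $z\in L_2$ different from all $z_i$ with $\bigwedge_{i<k}x_i<z\wedge\bigwedge_{i<j}\neg(y_i<z)\wedge\bigwedge_{i<k'}z<x'_i\wedge\bigwedge_{i<j'}\neg(z<y'_i)$. *)

From mathcomp Require Import all_boot.
Set Implicit Arguments. Unset Strict Implicit. Unset Printing Implicit Defensive.

Inductive form : Type :=
  | FLt  : nat -> nat -> form
  | FEq  : nat -> nat -> form
  | FBot : form
  | FImp : form -> form -> form
  | FAll : nat -> form -> form.

Definition FNot p := FImp p FBot.
Definition FTop := FNot FBot.
Definition FAnd p q := FNot (FImp p (FNot q)).
Definition FOr p q := FImp (FNot p) q.
Definition FEx i p := FNot (FAll i (FNot p)).

Fixpoint fv (p : form) : seq nat :=
  match p with
  | FLt i j | FEq i j => [:: i; j]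
  | FBot => [::]
  | FImp p q => fv p ++ fv q
  | FAll i p => filter (fun k => k != i) (fv p)
  end.
Definition sentence (p : form) : Prop := fv p = [::].

Definition upd (M : Type) (v : nat -> M) (i : nat) (a : M) : nat -> M :=
  fun k => if k == i then a else v k.

Fixpoint sat (M : Type) (R : M -> M -> Prop) (v : nat -> M) (p : form) : Prop :=
  match p with
  | FLt i j => R (v i) (v j)
  | FEq i j => v i = v j
  | FBot => False
  | FImp p q => sat R v p -> sat R v q
  | FAll i p => forall a : M, sat R (upd v i a) p
  end.

Definition bigAnd (ps : seq form) : form := foldr FAnd FTop ps.
Definition bigAll (xs : seq nat) (p : form) : form := foldr FAll p xs.
Fixpoint distinctF (xs : seq nat) : form :=
  match xs with
  | [::] => FTop
  | x :: xs' => FAnd (bigAnd [seq FNot (FEq x y) | y <- xs']) (distinctF xs')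
  end.

(** * The definable levels L1, L2, L3 (one free variable x; the auxiliary
    bound variables x+1, x+2, x+3 occur only inside these formulas). *)
Definition L1 (x : nat) : form := FAll x.+1 (FNot (FLt x.+1 x)).
Definition covers (y x z : nat) : form :=
  FAnd (FLt y x) (FNot (FEx z (FAnd (FLt y z) (FLt z x)))).
Definition L2 (x : nat) : form :=
  FEx x.+1 (FAnd (L1 x.+1) (covers x.+1 x x.+2)).
Definition L3 (x : nat) : form :=
  FEx x.+1 (FAnd (L2 x.+1) (covers x.+1 x x.+2)).

Definition ax_irrefl : form := FAll 0 (FNot (FLt 0 0)).
Definition ax_trans : form :=
  FAll 0 (FAll 1 (FAll 2 (FImp (FAnd (FLt 0 1) (FLt 1 2)) (FLt 0 2)))).
Definition ax_depth_ge3 : form :=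
  FEx 0 (FEx 1 (FEx 2 (FAnd (FLt 0 1) (FLt 1 2)))).
Definition ax_depth_le3 : form :=
  FNot (FEx 0 (FEx 1 (FEx 2 (FEx 3
     (bigAnd [:: FLt 0 1; FLt 1 2; FLt 2 3]))))).

Definition ax_a (j k l : nat) : form :=
  let xs := iota 0 k in
  let ys := iota k j in
  let zs := iota (k + j) l in
  let z := k + j + l in
  bigAll (xs ++ ys ++ zs)
    (FImp (bigAnd [:: bigAnd [seq L2 v | v <- xs ++ ys]; distinctF (xs ++ ys);
                      bigAnd [seq L1 v | v <- zs]; distinctF zs])
          (FEx z (bigAnd [:: L1 z;
                             bigAnd [seq FNot (FEq z w) | w <- zs];
                             bigAnd [seq FLt z x | x <- xs];
                             bigAnd [seq FNot (FLt z y) | y <- ys]]))).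

Definition ax_b (j k l : nat) : form :=
  let xs := iota 0 k in
  let ys := iota k j in
  let zs := iota (k + j) l in
  let z := k + j + l in
  bigAll (xs ++ ys ++ zs)
    (FImp (bigAnd [:: bigAnd [seq L2 v | v <- xs ++ ys]; distinctF (xs ++ ys);
                      bigAnd [seq L3 v | v <- zs]; distinctF zs])
          (FEx z (bigAnd [:: L3 z;
                             bigAnd [seq FNot (FEq z w) | w <- zs];
                             bigAnd [seq FLt x z | x <- xs];
                             bigAnd [seq FNot (FLt y z) | y <- ys]]))).

Definition ax_c (j j' k k' l : nat) : form :=
  let xs := iota 0 k in
  let ys := iota k j in
  let xs' := iota (k + j) k' in
  let ys' := iota (k + j + k') j' in
  let zs := iota (k + j + k' + j') l in
  let z := k + j + k' + j' + l in
  bigAll (xs ++ ys ++ xs' ++ ys' ++ zs)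
    (FImp (bigAnd [:: bigAnd [seq L1 v | v <- xs ++ ys]; distinctF (xs ++ ys);
                      bigAnd [seq L3 v | v <- xs' ++ ys']; distinctF (xs' ++ ys');
                      bigAnd [seq L2 v | v <- zs]; distinctF zs])
          (FEx z (bigAnd [:: L2 z;
                             bigAnd [seq FNot (FEq z w) | w <- zs];
                             bigAnd [seq FLt x z | x <- xs];
                             bigAnd [seq FNot (FLt y z) | y <- ys];
                             bigAnd [seq FLt z x | x <- xs'];
                             bigAnd [seq FNot (FLt z y) | y <- ys']]))).

Definition T_as_irr (p : form) : Prop :=
  p = ax_irrefl \/ p = ax_trans \/ p = ax_depth_ge3 \/ p = ax_depth_le3 \/
  (exists j k l, p = ax_a j k l) \/
  (exists j k l, p = ax_b j k l) \/
  (exists j j' k k' l, p = ax_c j j' k k' l).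

Definition is_model (T : form -> Prop) (M : Type) (R : M -> M -> Prop) : Prop :=
  inhabited M /\ forall p, T p -> forall v : nat -> M, sat R v p.

Definition finite_type (M : Type) : Prop :=
  exists (n : nat) (g : 'I_n -> M), forall x : M, exists i, g i = x.

Definition countably_infinite (M : Type) : Prop :=
  exists f : M -> nat, bijective f.

Definition isomorphic (M N : Type) (R : M -> M -> Prop) (S : N -> N -> Prop) : Prop :=
  exists f : M -> N, bijective f /\ forall x y, R x y <-> S (f x) (f y).

Definition aleph0_categorical (T : form -> Prop) : Prop :=
  forall (M N : Type) (R : M -> M -> Prop) (S : N -> N -> Prop),
    is_model T R -> is_model T S ->
    countably_infinite M -> countably_infinite N -> isomorphic R S.

Definition no_finite_models (T : form -> Prop) : Prop :=
  forall (M : Type) (R : M -> M -> Prop), is_model T R -> ~ finite_type M.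

Definition entails (T : form -> Prop) (p : form) : Prop :=
  forall (M : Type) (R : M -> M -> Prop), is_model T R ->
    forall v : nat -> M, sat R v p.

Definition complete (T : form -> Prop) : Prop :=
  (exists (M : Type) (R : M -> M -> Prop), is_model T R) /\
  forall p, sentence p -> entails T p \/ entails T (FNot p).

From mathcomp Require Import all_boot zify.
From Stdlib Require List Classical ClassicalEpsilon PropExtensionality.
Set Implicit Arguments. Unset Strict Implicit. Unset Printing Implicit Defensive.

(* The axioms are first read semantically ([is_modelP]): a model is a strict
   partial order without 4-chains, with a 3-chain, whose definable levels
   L_1, L_2, L_3 satisfy one uniform extension property -- for each level n,
   a fresh element of L_n realising any finite pattern of relations to the
   adjacent levels L_(n-1) and L_(n+1).  In a model every element has exactly
   one level, and between non-adjacent levels the relation is determined by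
   the levels alone.  Consequently the finite level-preserving partial
   isomorphisms between two models form a back-and-forth system.  A general
   development of back-and-forth systems then gives both that any two models
   satisfy the same sentences (Ehrenfeucht-Fraisse), which with an explicit
   countable model yields completeness, and, by Cantor's zig-zag, that two
   countable models are isomorphic.  Finally, L_1 is infinite in every model. *)

Notation propext := PropExtensionality.propositional_extensionality.

Lemma eq_exists (A : Type) (P Q : A -> Prop) :
  (forall a, P a = Q a) -> (exists a, P a) = (exists a, Q a).
Proof. by move=> E; apply: propext; split=> -[a Ha]; exists a; rewrite ?E // -E. Qed.

Lemma eq_forall (A : Type) (P Q : A -> Prop) :
  (forall a, P a = Q a) -> (forall a, P a) = (forall a, Q a).
Proof. by move=> E; apply: propext; split=> H a; rewrite ?E // -E. Qed.

Lemma iff_forall (A : Type) (P Q : A -> Prop) :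
  (forall a, P a <-> Q a) -> (forall a, P a) <-> (forall a, Q a).
Proof. by move=> E; split=> H a; apply/E. Qed.

Section Lists.
Variable T : Type.

Definition allIn (P : T -> Prop) (s : seq T) : Prop := forall x, List.In x s -> P x.

Lemma allIn_nil (P : T -> Prop) : allIn P [::].
Proof. by []. Qed.

Lemma allIn1 (P : T -> Prop) a : P a -> allIn P [:: a].
Proof. by move=> Ha x [<-|[]]. Qed.

Lemma allIn_cat (P : T -> Prop) s1 s2 :
  allIn P s1 -> allIn P s2 -> allIn P (s1 ++ s2).
Proof. by move=> H1 H2 x /List.in_app_iff [/H1|/H2]. Qed.

Lemma allIn_map (P : T -> Prop) (v : nat -> T) s :
  allIn P (map v s) = forall i, List.In i s -> P (v i).
Proof.
apply: propext; rewrite /allIn; split=> H x.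
- by move=> Hx; apply: H; apply: List.in_map.
- by case/List.in_map_iff=> i [<- /H].
Qed.

Lemma NoDup1 (a : T) : List.NoDup [:: a].
Proof. by constructor; [case | constructor]. Qed.

Lemma NoDup_cat_disjoint (s1 s2 : seq T) x :
  List.NoDup (s1 ++ s2) -> List.In x s1 -> List.In x s2 -> False.
Proof.
elim: s1 => //= y s1 IH /List.NoDup_cons_iff [Hy /IH {}IH] [<- Hx2|/IH //].
by apply: Hy; apply/List.in_app_iff; right.
Qed.

Lemma map_nth_segment (d : T) s A B C n :
  s = A ++ B ++ C -> size A = n -> map (nth d s) (iota n (size B)) = B.
Proof.
move=> -> <-; rewrite map_nth_iota; first by rewrite drop_size_cat // take_size_cat.
by rewrite !size_cat; lia.
Qed.

End Lists.

Lemma In_mem (T : eqType) (x : T) s : List.In x s <-> x \in s.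
Proof.
elim: s => [|y s IH] //=; rewrite in_cons; split.
- by case=> [->|/IH ->]; rewrite ?eqxx ?orbT.
- by case/orP=> [/eqP ->|/IH]; [left|right].
Qed.

Section Satisfaction.
Variables (M : Type) (R : M -> M -> Prop).

Lemma sat_ext (v v' : nat -> M) p : v =1 v' -> (sat R v p <-> sat R v' p).
Proof.
elim: p v v' => [i j|i j||p IHp q IHq|i p IHp] v v' E /=; rewrite ?E //.
- by have := IHp v v' E; have := IHq v v' E; tauto.
- have E' a : upd v i a =1 upd v' i a by move=> k; rewrite /upd E.
  by split=> H a; apply/(IHp _ _ (E' a)); apply: H.
Qed.

Lemma upd_same (v : nat -> M) i a : upd v i a i = a.
Proof. by rewrite /upd eqxx. Qed.

Lemma upd_other (v : nat -> M) i a j : j != i -> upd v i a j = v j.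
Proof. by rewrite /upd => /negbTE ->. Qed.

Lemma sat_and v p q : sat R v (FAnd p q) = (sat R v p /\ sat R v q).
Proof.
apply: propext => /=; split; last by case=> Hp Hq; apply.
move=> H; split; apply: Classical_Prop.NNPP => H'; apply: H => // ? ?; exact: H'.
Qed.

Lemma sat_ex v i p : sat R v (FEx i p) = exists a, sat R (upd v i a) p.
Proof.
apply: propext => /=; split; last by case=> a Ha H; apply: (H a).
by move=> H; apply: Classical_Pred_Type.not_all_not_ex => H'; apply: H.
Qed.

Lemma sat_bigAnd_cons v p ps : sat R v (bigAnd (p :: ps)) = (sat R v p /\ sat R v (bigAnd ps)).
Proof. exact: sat_and. Qed.

Lemma sat_bigAnd_nil v : sat R v (bigAnd [::]) = True.
Proof. by apply: propext; split=> // _ ?. Qed.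

Lemma sat_bigAnd_map (T : Type) (f : T -> form) v (xs : seq T) :
  sat R v (bigAnd [seq f x | x <- xs]) = (forall x, List.In x xs -> sat R v (f x)).
Proof.
apply: propext; elim: xs => [|x xs IH]; first by rewrite sat_bigAnd_nil; split=> // _ ? [].
rewrite map_cons sat_bigAnd_cons IH.
by split=> [[Hx Hxs] y [<-|/Hxs]|H] //; split=> [|y Hy]; apply: H; [left|right].
Qed.

Lemma valid_bigAll xs p : (forall v, sat R v (bigAll xs p)) <-> (forall v, sat R v p).
Proof.
elim: xs => [|x xs IH] //=; rewrite -IH; split=> H v; last by move=> a; apply: H.
have Ev : upd v x (v x) =1 v by move=> k; rewrite /upd; case: eqP => [->|].
by apply/(sat_ext _ Ev).
Qed.

Lemma sat_distinctF v xs : sat R v (distinctF xs) = List.NoDup (map v xs).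
Proof.
apply: propext; elim: xs => [|x xs IH]; first by split=> _; [exact: List.NoDup_nil|move=> ?].
rewrite -[distinctF _]/(FAnd (bigAnd [seq FNot (FEq x y) | y <- xs]) (distinctF xs)).
rewrite sat_and sat_bigAnd_map IH /= List.NoDup_cons_iff List.in_map_iff; split.
- by case=> Hx Hxs; split=> // -[y [Hyx /Hx]]; apply.
- by case=> Hx Hxs; split=> // y Hy Hxy; apply: Hx; exists y.
Qed.

Lemma sat_not v p : sat R v (FNot p) = ~ sat R v p.
Proof. by []. Qed.

Lemma sat_bigAnd1 v p : sat R v (bigAnd [:: p]) = sat R v p.
Proof. by rewrite sat_bigAnd_cons sat_bigAnd_nil; apply: propext; split=> [[]|]. Qed.

Lemma sat_imp v p q : sat R v (FImp p q) = (sat R v p -> sat R v q).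
Proof. by []. Qed.

Lemma sat_all v i p : sat R v (FAll i p) = forall a, sat R (upd v i a) p.
Proof. by []. Qed.

End Satisfaction.

(** ** The definable levels and the semantic content of the axioms *)

Section Levels.
Variables (M : Type) (R : M -> M -> Prop).

Definition minimal (a : M) : Prop := forall b, ~ R b a.

Definition lower_cover (b a : M) : Prop := R b a /\ ~ exists c, R b c /\ R c a.

Definition level (n : nat) (a : M) : Prop :=
  match n with
  | 1 => minimal a
  | 2 => exists b, minimal b /\ lower_cover b a
  | 3 => exists b, (exists c, minimal c /\ lower_cover c b) /\ lower_cover b a
  | _ => False
  end.

Lemma sat_L1 v x : sat R v (L1 x) = level 1 (v x).
Proof.
by apply: propext; split=> H b; have := H b; rewrite /= upd_same upd_other // ltn_eqF.
Qed.

Lemma sat_covers v y x z :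
  x != z -> y != z -> sat R v (covers y x z) = lower_cover (v y) (v x).
Proof.
move=> xz yz; rewrite /covers sat_and sat_not sat_ex.
by under eq_exists => c do rewrite sat_and /= !upd_same !upd_other //.
Qed.

Lemma sat_L2 v x : sat R v (L2 x) = level 2 (v x).
Proof.
rewrite /L2 sat_ex; apply: eq_exists => b.
by rewrite sat_and sat_L1 sat_covers ?ltn_eqF ?upd_same ?upd_other // ?ltn_eqF.
Qed.

Lemma sat_L3 v x : sat R v (L3 x) = level 3 (v x).
Proof.
rewrite /L3 sat_ex; apply: eq_exists => b.
by rewrite sat_and sat_L2 sat_covers ?ltn_eqF ?upd_same ?upd_other // ?ltn_eqF.
Qed.

Lemma sat_bigAnd_pointwise (g : nat -> form) (P : M -> Prop) v s :
  (forall i, sat R v (g i) = P (v i)) -> sat R v (bigAnd (map g s)) = allIn P (map v s).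
Proof.
by move=> E; rewrite sat_bigAnd_map allIn_map; apply: propext; split=> H i /H; rewrite E.
Qed.

Lemma sat_all_L1 v s : sat R v (bigAnd [seq L1 i | i <- s]) = allIn (level 1) (map v s).
Proof. exact/sat_bigAnd_pointwise/sat_L1. Qed.

Lemma sat_all_L2 v s : sat R v (bigAnd [seq L2 i | i <- s]) = allIn (level 2) (map v s).
Proof. exact/sat_bigAnd_pointwise/sat_L2. Qed.

Lemma sat_all_L3 v s : sat R v (bigAnd [seq L3 i | i <- s]) = allIn (level 3) (map v s).
Proof. exact/sat_bigAnd_pointwise/sat_L3. Qed.

Lemma sat_all_below v z s :
  sat R v (bigAnd [seq FLt z i | i <- s]) = allIn (R (v z)) (map v s).
Proof. exact: sat_bigAnd_pointwise. Qed.

Lemma sat_all_nbelow v z s :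
  sat R v (bigAnd [seq FNot (FLt z i) | i <- s]) = allIn (fun y => ~ R (v z) y) (map v s).
Proof. exact: sat_bigAnd_pointwise. Qed.

Lemma sat_all_above v z s :
  sat R v (bigAnd [seq FLt i z | i <- s]) = allIn (R^~ (v z)) (map v s).
Proof. exact: sat_bigAnd_pointwise. Qed.

Lemma sat_all_nabove v z s :
  sat R v (bigAnd [seq FNot (FLt i z) | i <- s]) = allIn (fun y => ~ R y (v z)) (map v s).
Proof. exact: sat_bigAnd_pointwise. Qed.

Lemma sat_all_neq v z s :
  sat R v (bigAnd [seq FNot (FEq z i) | i <- s]) = ~ List.In (v z) (map v s).
Proof.
rewrite (@sat_bigAnd_pointwise _ (fun y => v z <> y)) // allIn_map.
apply: propext; rewrite List.in_map_iff; split=> H.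
- by case=> i [Ei Hi]; apply: (H i Hi).
- by move=> i Hi Ei; apply: H; exists i.
Qed.

Lemma map_upd_iota (v : nat -> M) z a s n :
  s + n <= z -> map (upd v z a) (iota s n) = map v (iota s n).
Proof.
move=> Hz; apply/eq_in_map => i; rewrite mem_iota => /andP[_ Hi].
by rewrite upd_other // ltn_eqF //; lia.
Qed.

Definition realises n (Xb Yb Xa Ya Z : seq M) (z : M) : Prop :=
  level n z /\ ~ List.In z Z /\ allIn (R^~ z) Xb /\ allIn (fun y => ~ R y z) Yb /\
  allIn (R z) Xa /\ allIn (fun y => ~ R z y) Ya.

(* The uniform shape of the extension axioms (a), (b), (c) for level [n]:
   [Xb], [Yb] come from the level below and [Xa], [Ya] from the level above. *)
Definition extension_instance n (Xb Yb Xa Ya Z : seq M) : Prop :=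
  allIn (level n.-1) (Xb ++ Yb) -> List.NoDup (Xb ++ Yb) ->
  allIn (level n.+1) (Xa ++ Ya) -> List.NoDup (Xa ++ Ya) ->
  allIn (level n) Z -> List.NoDup Z ->
  exists z, realises n Xb Yb Xa Ya Z z.

Lemma realises_nil_below n Xa Ya Z z :
  realises n [::] [::] Xa Ya Z z =
  (level n z /\ ~ List.In z Z /\ allIn (R z) Xa /\ allIn (fun y => ~ R z y) Ya).
Proof.
by apply: propext; have := allIn_nil (R^~ z); have := allIn_nil (fun y => ~ R y z); firstorder.
Qed.

Lemma realises_nil_above n Xb Yb Z z :
  realises n Xb Yb [::] [::] Z z =
  (level n z /\ ~ List.In z Z /\ allIn (R^~ z) Xb /\ allIn (fun y => ~ R y z) Yb).
Proof.
by apply: propext; have := allIn_nil (R z); have := allIn_nil (fun y => ~ R z y); firstorder.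
Qed.

Lemma sat_ax_a j k l : (forall v, sat R v (ax_a j k l)) <->
  forall w, extension_instance 1 [::] [::] (map w (iota 0 k)) (map w (iota k j))
    (map w (iota (k + j) l)).
Proof.
rewrite valid_bigAll; apply: iff_forall => w; rewrite /extension_instance cats0.
under eq_exists => z do rewrite realises_nil_below.
rewrite sat_imp 3!sat_bigAnd_cons sat_bigAnd1 sat_all_L2 sat_all_L1 !sat_distinctF sat_ex.
under eq_exists => a do rewrite 3!sat_bigAnd_cons sat_bigAnd1 sat_L1 upd_same
  sat_all_neq sat_all_below sat_all_nbelow upd_same.
under eq_exists => a do (rewrite !map_upd_iota; try lia).
rewrite !map_cat.
by have := allIn_nil (level 0); have := @List.NoDup_nil M; tauto.
Qed.

Lemma sat_ax_b j k l : (forall v, sat R v (ax_b j k l)) <->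
  forall w, extension_instance 3 (map w (iota 0 k)) (map w (iota k j)) [::] [::]
    (map w (iota (k + j) l)).
Proof.
rewrite valid_bigAll; apply: iff_forall => w; rewrite /extension_instance cats0.
under eq_exists => z do rewrite realises_nil_above.
rewrite sat_imp 3!sat_bigAnd_cons sat_bigAnd1 sat_all_L2 sat_all_L3 !sat_distinctF sat_ex.
under eq_exists => a do rewrite 3!sat_bigAnd_cons sat_bigAnd1 sat_L3 upd_same
  sat_all_neq sat_all_above sat_all_nabove upd_same.
under eq_exists => a do (rewrite !map_upd_iota; try lia).
rewrite !map_cat.
by have := allIn_nil (level 4); have := @List.NoDup_nil M; tauto.
Qed.

Lemma sat_ax_c j j' k k' l : (forall v, sat R v (ax_c j j' k k' l)) <->
  forall w, extension_instance 2 (map w (iota 0 k)) (map w (iota k j))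
    (map w (iota (k + j) k')) (map w (iota (k + j + k') j'))
    (map w (iota (k + j + k' + j') l)).
Proof.
rewrite valid_bigAll; apply: iff_forall => w; rewrite sat_imp.
rewrite 5!sat_bigAnd_cons sat_bigAnd1 sat_all_L1 sat_all_L3 sat_all_L2 !sat_distinctF sat_ex.
under eq_exists => a do rewrite 5!sat_bigAnd_cons sat_bigAnd1 sat_L2 upd_same
  sat_all_neq sat_all_below sat_all_nbelow sat_all_above sat_all_nabove upd_same.
under eq_exists => a do (rewrite !map_upd_iota; try lia).
rewrite /extension_instance !map_cat.
tauto.
Qed.

Lemma allIn_level0 (s : seq M) : allIn (level 0) s -> s = [::].
Proof. by case: s => // x s /(_ x (or_introl erefl)). Qed.

Definition extension_property : Prop :=
  forall n Xb Yb Xa Ya Z, 0 < n < 4 -> extension_instance n Xb Yb Xa Ya Z.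

(* In a nonempty structure the axioms (a), (b), (c) say exactly this; the
   variables are instantiated by listing the given elements in one sequence. *)
Lemma extension_propertyP : inhabited M ->
  (forall j k l v, sat R v (ax_a j k l)) /\ (forall j k l v, sat R v (ax_b j k l)) /\
  (forall j j' k k' l v, sat R v (ax_c j j' k k' l)) <-> extension_property.
Proof.
case=> d; split=> [[Ha [Hb Hc]]|H]; last first.
  split; [|split] => [j k l|j k l|j j' k k' l].
  - by apply/sat_ax_a => w; apply: H.
  - by apply/sat_ax_b => w; apply: H.
  - by apply/sat_ax_c => w; apply: H.
case=> [|[|[|[|//]]]] // Xb Yb Xa Ya Z _; rewrite /extension_instance.
- move=> /allIn_level0 /List.app_eq_nil [-> ->].
  have := proj1 (sat_ax_a (size Ya) (size Xa) (size Z)) (Ha _ _ _) (nth d (Xa ++ Ya ++ Z)).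
  rewrite (@map_nth_segment _ _ _ [::] _ (Ya ++ Z)) // (@map_nth_segment _ _ _ Xa _ Z) //.
  by rewrite (@map_nth_segment _ _ _ (Xa ++ Ya) _ [::]) ?cats0 ?catA ?size_cat //; exact.
- have := proj1 (sat_ax_c (size Yb) (size Ya) (size Xb) (size Xa) (size Z)) (Hc _ _ _ _ _)
    (nth d (Xb ++ Yb ++ Xa ++ Ya ++ Z)).
  rewrite (@map_nth_segment _ _ _ [::] _ (Yb ++ Xa ++ Ya ++ Z)) //.
  rewrite (@map_nth_segment _ _ _ Xb _ (Xa ++ Ya ++ Z)) //.
  rewrite (@map_nth_segment _ _ _ (Xb ++ Yb) _ (Ya ++ Z)) ?size_cat -?catA //.
  rewrite (@map_nth_segment _ _ _ (Xb ++ Yb ++ Xa) _ Z) ?size_cat ?addnA -?catA //.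
  by rewrite (@map_nth_segment _ _ _ (Xb ++ Yb ++ Xa ++ Ya) _ [::]) ?size_cat ?addnA ?cats0 -?catA.
- move=> HXb HdXb /allIn_level0 /List.app_eq_nil [-> ->].
  have := proj1 (sat_ax_b (size Yb) (size Xb) (size Z)) (Hb _ _ _) (nth d (Xb ++ Yb ++ Z)).
  rewrite (@map_nth_segment _ _ _ [::] _ (Yb ++ Z)) // (@map_nth_segment _ _ _ Xb _ Z) //.
  by rewrite (@map_nth_segment _ _ _ (Xb ++ Yb) _ [::]) ?cats0 ?catA ?size_cat //; exact.
Qed.

Record as_irr_structure : Prop := AsIrrStructure {
  carrier_inhabited : inhabited M;
  rel_irrefl : forall a, ~ R a a;
  rel_trans : forall a b c, R a b -> R b c -> R a c;
  rel_depth3 : exists a b c, R a b /\ R b c;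
  rel_no_chain4 : forall a b c d, R a b -> R b c -> R c d -> False;
  rel_extension : extension_property }.

Lemma sat_ax_irrefl v : sat R v ax_irrefl = forall a, ~ R a a.
Proof. by []. Qed.

Lemma sat_ax_trans v : sat R v ax_trans = forall a b c, R a b -> R b c -> R a c.
Proof.
do 3 (rewrite sat_all; apply: eq_forall => ?).
by rewrite sat_imp sat_and; apply: propext; split=> H => [? ?|[]]; apply: H.
Qed.

Lemma sat_ax_depth_ge3 v : sat R v ax_depth_ge3 = exists a b c, R a b /\ R b c.
Proof.
by rewrite /ax_depth_ge3; do 3 (rewrite sat_ex; apply: eq_exists => ?); rewrite sat_and.
Qed.

Lemma sat_ax_depth_le3 v :
  sat R v ax_depth_le3 = ~ exists a b c d, R a b /\ R b c /\ R c d.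
Proof.
rewrite /ax_depth_le3 sat_not; congr (~ _).
by do 4 (rewrite sat_ex; apply: eq_exists => ?); rewrite 2!sat_bigAnd_cons sat_bigAnd1.
Qed.

Lemma is_modelP : is_model T_as_irr R <-> as_irr_structure.
Proof.
split=> [[[d] HT]|[inhM irr tr d3 no4 ext]].
  have ax_ext := proj1 (extension_propertyP (inhabits d)).
  split=> //.
  - by rewrite -(sat_ax_irrefl (fun=> d)); apply: HT; left.
  - by rewrite -(sat_ax_trans (fun=> d)); apply: HT; right; left.
  - by rewrite -(sat_ax_depth_ge3 (fun=> d)); apply: HT; do 2 right; left.
  - move=> a b c e Hab Hbc Hce; have := HT _ (or_intror (or_intror (or_intror (or_introl erefl)))).
    by move=> /(_ (fun=> d)); rewrite sat_ax_depth_le3; apply; exists a, b, c, e.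
  - apply: ax_ext; split; [|split] => * ; apply: HT; do 4 right.
    + by left; do 3 eexists.
    + by right; left; do 3 eexists.
    + by do 2 right; do 5 eexists.
have [ax_a [ax_b ax_c]] := proj2 (extension_propertyP inhM) ext.
split=> // p [->|[->|[->|[->|[[j [k [l ->]]]|[[j [k [l ->]]]|[j [j' [k [k' [l ->]]]]]]]]]]] v.
- by rewrite sat_ax_irrefl.
- by rewrite sat_ax_trans.
- by rewrite sat_ax_depth_ge3.
- by rewrite sat_ax_depth_le3 => -[a [b [c [e [Hab [Hbc Hce]]]]]]; apply: (no4 a b c e).
- exact: ax_a.
- exact: ax_b.
- exact: ax_c.
Qed.

End Levels.

Lemma level_range (M : Type) (R : M -> M -> Prop) n a : level R n a -> 0 < n < 4.
Proof. by case: n => [|[|[|[|]]]]. Qed.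

(** ** The shape of a model: three levels, related as in the paper *)

Section Structure.
Variables (M : Type) (R : M -> M -> Prop).
Hypothesis HM : as_irr_structure R.

Let trans := rel_trans HM.
Let no_chain4 := rel_no_chain4 HM.

(* Every non-minimal element lies above a minimal one (there are no 4-chains). *)
Lemma minimal_below a : ~ level R 1 a -> exists2 m, level R 1 m & R m a.
Proof.
move=> /Classical_Pred_Type.not_all_not_ex [b Hba].
have [Hb|/Classical_Pred_Type.not_all_not_ex [c Hcb]] := Classical_Prop.classic (level R 1 b).
  by exists b.
have [Hc|/Classical_Pred_Type.not_all_not_ex [e Hec]] := Classical_Prop.classic (level R 1 c).
  by exists c => //; apply: trans Hcb Hba.
by case: (no_chain4 Hec Hcb Hba).
Qed.

Lemma level_exists a : exists n, level R n a.
Proof.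
have [H1|/minimal_below [m Hm Hma]] := Classical_Prop.classic (level R 1 a); first by exists 1.
have [[c [Hmc Hca]]|Hcov] := Classical_Prop.classic (exists c, R m c /\ R c a).
- exists 3, c; split.
  + exists m; split=> //; split=> // -[e [Hme Hec]]; exact: (no_chain4 Hme Hec Hca).
  + by split=> // -[e [Hce Hea]]; apply: (no_chain4 Hmc Hce Hea).
- by exists 2, m.
Qed.

Lemma level2_below a : level R 2 a -> exists z, R a z.
Proof.
move=> Ha; have [z [_ [_ [Hz _]]]] := rel_extension HM (n := 3) (Xb := [:: a])
  (Yb := [::]) (Xa := [::]) (Ya := [::]) (Z := [::]) erefl (allIn1 Ha) (NoDup1 a)
  (allIn_nil _) (List.NoDup_nil _) (allIn_nil _) (List.NoDup_nil _).
by exists z; apply: Hz; left.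
Qed.

Lemma level_unique m n a : level R m a -> level R n a -> m = n.
Proof.
wlog lt_mn : m n / m < n.
  move=> W Hm Hn; case: (ltngtP m n) => [lt|gt|//]; first exact: W.
  by apply/esym; apply: W.
case: m n lt_mn => [|[|[|[|]]]] [|[|[|[|]]]] //= _.
- by move=> Ha [b [_ [Hba _]]]; case: (Ha b Hba).
- by move=> Ha [b [_ [Hba _]]]; case: (Ha b Hba).
- move=> /level2_below [z Haz] [b [[c [_ [Hcb _]]] [Hba _]]].
  case: (no_chain4 Hcb Hba Haz).
Qed.

Lemma level2_rel a b : level R 2 a -> R a b -> level R 3 b.
Proof.
move=> Ha Hab; exists a; split=> //; split=> // -[c [Hac Hcb]].
by case: Ha => m [_ [Hma _]]; apply: (no_chain4 Hma Hac Hcb).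
Qed.

Lemma rel_level m n a b : R a b -> level R m a -> level R n b -> m < n.
Proof.
move=> Hab; case: m n => [|[|[|[|]]]] [|[|[|[|]]]] //=.
- by move=> _ /(_ a Hab).
- by move=> _ /(_ a Hab).
- by move=> Ha Hb; have := @level_unique 2 3 b Hb (level2_rel Ha Hab).
- by move=> _ /(_ a Hab).
- by move=> [c [[e [_ [Hec _]]] [Hca _]]]; have := no_chain4 Hec Hca Hab.
- by move=> [c [[e [_ [Hec _]]] [Hca _]]]; have := no_chain4 Hec Hca Hab.
Qed.

Lemma rel_level13 a b : level R 1 a -> level R 3 b -> R a b.
Proof.
move=> Ha Hb; have [z [_ [_ [Haz [_ [Hzb _]]]]]] := rel_extension HM (n := 2)
  (Xb := [:: a]) (Yb := [::]) (Xa := [:: b]) (Ya := [::]) (Z := [::]) erefl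
  (allIn1 Ha) (NoDup1 a) (allIn1 Hb) (NoDup1 b) (allIn_nil _) (List.NoDup_nil _).
by apply: (trans (Haz a _) (Hzb b _)); left.
Qed.

Lemma rel_nonadjacent m n a b :
  level R m a -> level R n b -> m.+1 != n -> (R a b <-> m.+2 = n).
Proof.
move=> Ha Hb Hmn; have /andP[m0 m4] := level_range Ha; have /andP[n0 n4] := level_range Hb.
split=> [Hab|Emn]; first by have := rel_level Hab Ha Hb; lia.
have Em : m = 1 by lia.
have En : n = 3 by lia.
by subst m n; apply: rel_level13.
Qed.

Lemma minimal_list n : exists s, size s = n /\ List.NoDup s /\ allIn (level R 1) s.
Proof.
elim: n => [|n [s [Hs [Hnd Hlev]]]].
  by exists [::]; split=> //; split=> //; exact: (List.NoDup_nil _).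
have [z [Hz [Hzs _]]] := rel_extension HM (n := 1) (Xb := [::]) (Yb := [::])
  (Xa := [::]) (Ya := [::]) (Z := s) erefl (allIn_nil _) (List.NoDup_nil _)
  (allIn_nil _) (List.NoDup_nil _) Hlev Hnd.
exists (z :: s); split; first by rewrite /= Hs.
split; first by constructor.
by move=> x [<-|/Hlev].
Qed.

End Structure.

(** ** Back-and-forth systems *)

Section BackAndForth.
Variables (M N : Type) (R : M -> M -> Prop) (S : N -> N -> Prop).

Definition partial_iso (P : seq (M * N)) : Prop :=
  forall p q, List.In p P -> List.In q P ->
    (p.1 = q.1 <-> p.2 = q.2) /\ (R p.1 q.1 <-> S p.2 q.2).

Variable good : seq (M * N) -> Prop.
Hypothesis good_partial : forall P, good P -> partial_iso P.
Hypothesis good_forth : forall P a, good P -> exists b, good ((a, b) :: P).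
Hypothesis good_back : forall P b, good P -> exists a, good ((a, b) :: P).

Section Equivalence.
Hypothesis good_sub :
  forall P Q, (forall p, List.In p Q -> List.In p P) -> good P -> good Q.

Lemma back_and_forth_sat p : forall (v : nat -> M) (w : nat -> N) (vs : seq nat),
  {subset fv p <= vs} -> good [seq (v i, w i) | i <- vs] -> (sat R v p <-> sat S w p).
Proof.
have graphP (v : nat -> M) (w : nat -> N) (vs : seq nat) i :
    i \in vs -> List.In (v i, w i) [seq (v i, w i) | i <- vs].
  by move=> Hi; apply: (List.in_map (fun i => (v i, w i))); apply/In_mem.
elim: p => [i j|i j||p IHp q IHq|i p IHp] v w vs Hfv Hgood /=.
- have := good_partial Hgood (graphP v w vs i _) (graphP v w vs j _).
  by rewrite !Hfv ?inE ?eqxx ?orbT //; case.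
- have := good_partial Hgood (graphP v w vs i _) (graphP v w vs j _).
  by rewrite !Hfv ?inE ?eqxx ?orbT //; case.
- by [].
- have Hp : {subset fv p <= vs} by move=> k Hk; apply: Hfv; rewrite mem_cat Hk.
  have Hq : {subset fv q <= vs} by move=> k Hk; apply: Hfv; rewrite mem_cat Hk orbT.
  by have := IHp _ _ _ Hp Hgood; have := IHq _ _ _ Hq Hgood; tauto.
- have Hp : {subset fv p <= i :: vs}.
    by move=> k Hk; rewrite inE; case: eqVneq => //= ne; apply: Hfv; rewrite mem_filter ne.
  have step a b : good ((a, b) :: [seq (v i, w i) | i <- vs]) ->
      (sat R (upd v i a) p <-> sat S (upd w i b) p).
    move=> Hab; apply: (IHp _ _ (i :: vs) Hp); apply: good_sub Hab => q /= [<-|].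
    + by rewrite /upd eqxx; left.
    + case/List.in_map_iff=> k [<- Hk]; rewrite /upd; case: eqP => _; first by left.
      by right; apply: (List.in_map (fun k => (v k, w k))).
  split=> H x.
  + by have [a Ha] := good_back x Hgood; apply/(step a x Ha).
  + by have [b Hb] := good_forth x Hgood; apply/(step x b Hb).
Qed.

Lemma back_and_forth_sentence p (v : nat -> M) (w : nat -> N) :
  good [::] -> sentence p -> (sat R v p <-> sat S w p).
Proof. by move=> Hnil Hp; apply: (back_and_forth_sat (vs := [::])) => // k; rewrite Hp. Qed.

End Equivalence.

Section Zigzag.
Hypothesis good_nil : good [::].
Variables (enumM : nat -> M) (enumN : nat -> N).
Hypothesis enumM_onto : forall x, exists n, enumM n = x.
Hypothesis enumN_onto : forall y, exists n, enumN n = y.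

Let goodSeq := {P | good P}.

Let forth_step (P : goodSeq) (a : M) : goodSeq :=
  let: exist b Hb := ClassicalEpsilon.constructive_indefinite_description _
    (good_forth a (proj2_sig P)) in exist _ ((a, b) :: proj1_sig P) Hb.

Let back_step (P : goodSeq) (b : N) : goodSeq :=
  let: exist a Ha := ClassicalEpsilon.constructive_indefinite_description _
    (good_back b (proj2_sig P)) in exist _ ((a, b) :: proj1_sig P) Ha.

Let forth_stepE P a : exists b, proj1_sig (forth_step P a) = (a, b) :: proj1_sig P.
Proof.
by rewrite /forth_step; case: ClassicalEpsilon.constructive_indefinite_description => b; exists b.
Qed.

Let back_stepE P b : exists a, proj1_sig (back_step P b) = (a, b) :: proj1_sig P.
Proof.
by rewrite /back_step; case: ClassicalEpsilon.constructive_indefinite_description => a; exists a.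
Qed.

(* stage n.+1 makes sure that [enumM n] and [enumN n] are matched *)
Fixpoint stage (n : nat) : goodSeq :=
  if n is n'.+1 then back_step (forth_step (stage n') (enumM n')) (enumN n')
  else exist _ [::] good_nil.

Lemma stage_mono m n p : m <= n ->
  List.In p (proj1_sig (stage m)) -> List.In p (proj1_sig (stage n)).
Proof.
elim: n => [|n IH]; first by rewrite leqn0 => /eqP ->.
rewrite leq_eqVlt => /orP[/eqP -> //|/IH H /H Hp] /=.
have [a ->] := back_stepE (forth_step (stage n) (enumM n)) (enumN n).
by have [b ->] := forth_stepE (stage n) (enumM n); right; right.
Qed.

Definition linked (x : M) (y : N) : Prop := exists n, List.In (x, y) (proj1_sig (stage n)).

Lemma linked_total x : exists y, linked x y.
Proof.
have [n <-] := enumM_onto x; have [b Eb] := forth_stepE (stage n) (enumM n).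
exists b, n.+1 => /=; have [a ->] := back_stepE (forth_step (stage n) (enumM n)) (enumN n).
by rewrite Eb; right; left.
Qed.

Lemma linked_onto y : exists x, linked x y.
Proof.
have [n <-] := enumN_onto y.
have [a Ea] := back_stepE (forth_step (stage n) (enumM n)) (enumN n).
by exists a, n.+1; rewrite /= Ea; left.
Qed.

Lemma linked_iso x y x' y' : linked x y -> linked x' y' ->
  (x = x' <-> y = y') /\ (R x x' <-> S y y').
Proof.
move=> [m Hm] [n Hn].
exact: (good_partial (proj2_sig (stage (maxn m n)))
  (stage_mono (leq_maxl m n) Hm) (stage_mono (leq_maxr m n) Hn)).
Qed.

Theorem back_and_forth_iso : isomorphic R S.
Proof.
pose cid := ClassicalEpsilon.constructive_indefinite_description.
pose f x := proj1_sig (cid _ _ (linked_total x)).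
pose g y := proj1_sig (cid _ _ (linked_onto y)).
have Hf x : linked x (f x) := proj2_sig (cid _ _ (linked_total x)).
have Hg y : linked (g y) y := proj2_sig (cid _ _ (linked_onto y)).
exists f; split=> [|x x']; last exact: (linked_iso (Hf x) (Hf x')).2.
exists g => [x|y].
- by apply/(linked_iso (Hg (f x)) (Hf x)).1.
- by have [[/(_ erefl) <- _] _] := linked_iso (Hg y) (Hf (g y)).
Qed.

End Zigzag.
End BackAndForth.

Section Images.
Variables (M N : Type) (R : M -> M -> Prop) (S : N -> N -> Prop).

Definition image_of (P : seq (M * N)) (Q : M -> Prop) (s : seq N) : Prop :=
  List.NoDup s /\ forall y, List.In y s <-> exists x, List.In (x, y) P /\ Q x.

Lemma image_exists P Q : exists s, image_of P Q s.
Proof.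
elim: P => [|[x y] P [s [nds Hs]]].
  exists [::]; split=> [|y]; first exact: List.NoDup_nil.
  by split=> [[]|[x [[] _]]].
have [[Qx ys]|Hxy] := Classical_Prop.classic (Q x /\ ~ List.In y s).
- exists (y :: s); split; first by constructor.
  move=> y'; split.
  + case=> [<-|/Hs [x' [Hx' Qx']]]; first by exists x; split=> //; left.
    by exists x'; split=> //; right.
  + case=> x' [[[_ <-]|Hx'] Qx']; first by left.
    by right; apply/Hs; exists x'.
- exists s; split=> // y'; split.
  + by move/Hs=> [x' [Hx' Qx']]; exists x'; split=> //; right.
  + case=> x' [[[<- <-]|Hx'] Qx']; last by apply/Hs; exists x'.
    by apply: Classical_Prop.NNPP => ny; apply: Hxy.
Qed.

Lemma image_test P (L T : M -> Prop) (U : N -> Prop) Xs Ys :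
  image_of P (fun x => L x /\ T x) Xs -> image_of P (fun x => L x /\ ~ T x) Ys ->
  allIn U Xs -> allIn (fun y => ~ U y) Ys ->
  forall x y, List.In (x, y) P -> L x -> (T x <-> U y).
Proof.
move=> [_ HX] [_ HY] HUX HUY x y Hxy Lx.
have [Tx|nTx] := Classical_Prop.classic (T x).
- by split=> // _; apply/HUX/HX; exists x.
- by split=> // Uy; case: (HUY y); [apply/HY; exists x|].
Qed.

Lemma NoDup_images P (L T : M -> Prop) Xs Ys : partial_iso R S P ->
  image_of P (fun x => L x /\ T x) Xs -> image_of P (fun x => L x /\ ~ T x) Ys ->
  List.NoDup (Xs ++ Ys).
Proof.
move=> HP [ndX HX] [ndY HY]; apply: List.NoDup_app => // y.
move=> /HX [x1 [H1 [_ T1]]] /HY [x2 [H2 [_ T2]]].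
by have [[_ /(_ erefl) /= E] _] := HP _ _ H2 H1; apply: T2; rewrite E.
Qed.

End Images.

(** ** Level-preserving partial isomorphisms between models *)

Definition level_iso (M N : Type) (R : M -> M -> Prop) (S : N -> N -> Prop)
    (P : seq (M * N)) : Prop :=
  partial_iso R S P /\ forall p, List.In p P -> forall n, level R n p.1 <-> level S n p.2.

Section LevelIso.
Variables (M N : Type) (R : M -> M -> Prop) (S : N -> N -> Prop).

Lemma level_iso_nil : level_iso R S [::].
Proof. by split=> [? ? []|? []]. Qed.

Lemma level_iso_sub P Q :
  (forall p, List.In p Q -> List.In p P) -> level_iso R S P -> level_iso R S Q.
Proof.
by move=> HQP [HP HPl]; split=> [p q /HQP Hp /HQP Hq|p /HQP]; [apply: HP|apply: HPl].
Qed.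

Lemma level_iso_swap P : level_iso R S P -> level_iso S R [seq (p.2, p.1) | p <- P].
Proof.
move=> [HP HPl]; split=> [p q|p] /List.in_map_iff[[x y] [<- Hp]].
- by move/List.in_map_iff=> [[x' y'] [<- Hq]] /=; have := HP _ _ Hp Hq; rewrite /=; tauto.
- by move=> n; apply: iff_sym; apply: (HPl _ Hp).
Qed.

Hypotheses (HM : as_irr_structure R) (HN : as_irr_structure S).

Lemma level_iso_cons P a b n : level_iso R S P -> level R n a -> level S n b ->
  (forall x y, List.In (x, y) P -> (a = x <-> b = y) /\ (R a x <-> S b y) /\ (R x a <-> S y b)) ->
  level_iso R S ((a, b) :: P).
Proof.
move=> [HP HPl] Ha Hb Hab; split=> [p q|p [<- k|Hp]]; last 2 first.
- by split=> Hk; [rewrite (level_unique HM Hk Ha)|rewrite (level_unique HN Hk Hb)].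
- exact: HPl.
have Haa : R a a <-> S b b by split=> [/(rel_irrefl HM)|/(rel_irrefl HN)].
case=> [<-|Hp] [<-|Hq].
- by split.
- by case: q Hq => x y /Hab /= [? [? ?]].
- by case: p Hp => x y /Hab /= [E [_ ?]]; split=> //; split=> /esym /E /esym.
- exact: HP.
Qed.

(* A new element [a] on level n is matched with an element
   of N on level n whose relations to the partners of the matched elements on
   levels n-1 and n+1 follow the pattern of [a]; it exists by the extension
   property of N.  All other relations are forced by the levels. *)
Lemma level_iso_forth P a : level_iso R S P -> exists b, level_iso R S ((a, b) :: P).
Proof.
move=> HP; have [[b Hab]|Hnew] := Classical_Prop.classic (exists b, List.In (a, b) P).
  by exists b; apply: level_iso_sub HP => q [<-|].
have [n Ha] := level_exists HM a.
have [Xb HXb] := image_exists P (fun x => level R n.-1 x /\ R x a).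
have [Yb HYb] := image_exists P (fun x => level R n.-1 x /\ ~ R x a).
have [Xa HXa] := image_exists P (fun x => level R n.+1 x /\ R a x).
have [Ya HYa] := image_exists P (fun x => level R n.+1 x /\ ~ R a x).
have [Z HZ] := image_exists P (fun x => level R n x /\ True).
have onlevel k (Q : M -> Prop) s :
    image_of P (fun x => level R k x /\ Q x) s -> allIn (level S k) s.
  by move=> [_ Hs] y /Hs [x [Hxy [Hx _]]]; apply/(HP.2 _ Hxy).
have [b [Hb [HbZ [HbXb [HbYb [HbXa HbYa]]]]]] := rel_extension HN (level_range Ha)
  (allIn_cat (onlevel _ _ _ HXb) (onlevel _ _ _ HYb)) (NoDup_images HP.1 HXb HYb)
  (allIn_cat (onlevel _ _ _ HXa) (onlevel _ _ _ HYa)) (NoDup_images HP.1 HXa HYa)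
  (onlevel _ _ _ HZ) HZ.1.
exists b; apply: (level_iso_cons HP Ha Hb) => x y Hxy.
have [m Hx] := level_exists HM x.
have Hy : level S m y := (HP.2 _ Hxy m).1 Hx.
split; [|split].
- split=> E; first by case: Hnew; exists y; rewrite E.
  have Emn : m = n by apply: (level_unique HN Hy); rewrite -E.
  by case: HbZ; rewrite E; apply/HZ.2; exists x; rewrite -Emn.
- case: (eqVneq n.+1 m) => [Enm|Hnm].
  + by subst m; apply: (image_test HXa HYa HbXa HbYa Hxy Hx).
  + exact: iff_trans (rel_nonadjacent HM Ha Hx Hnm) (iff_sym (rel_nonadjacent HN Hb Hy Hnm)).
- case: (eqVneq m.+1 n) => [Emn|Hmn].
  + have Hx' : level R n.-1 x by rewrite -Emn.
    exact: (image_test HXb HYb HbXb HbYb Hxy Hx').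
  + exact: iff_trans (rel_nonadjacent HM Hx Ha Hmn) (iff_sym (rel_nonadjacent HN Hy Hb Hmn)).
Qed.

End LevelIso.

(* The back property, by symmetry. *)
Lemma level_iso_back (M N : Type) (R : M -> M -> Prop) (S : N -> N -> Prop) P b :
  as_irr_structure R -> as_irr_structure S ->
  level_iso R S P -> exists a, level_iso R S ((a, b) :: P).
Proof.
move=> HM HN HP; have [a /level_iso_swap Ha] := level_iso_forth HN HM b (level_iso_swap HP).
have swapK : [seq (p.2, p.1) | p <- [seq (p.2, p.1) | p <- P]] = P.
  by elim: P {HP Ha} => //= -[x y] P ->.
by exists a; rewrite /= swapK in Ha.
Qed.

(** ** A countable model *)

(* An element is a level (1, 2 or 3), a rank, and a finite set of codes of
   elements; between adjacent levels, the element of larger rank decides the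
   edge: it lies above/below exactly the elements whose codes it lists. *)
Definition point := ('I_3 * nat * seq nat)%type.
Definition lvl (x : point) : nat := (nat_of_ord x.1.1).+1.
Definition rk (x : point) : nat := x.1.2.
Definition dat (x : point) : seq nat := x.2.
Definition code (x : point) : nat := pickle x.
Definition mk (l r : nat) (d : seq nat) : point := (inord l.-1, r, d).

Definition link (x y : point) : bool :=
  if rk x < rk y then code x \in dat y else code y \in dat x.

Definition below (x y : point) : Prop := (lvl x < lvl y) && (((lvl x).+1 == lvl y) ==> link x y).

Lemma lvl_range x : 0 < lvl x < 4.
Proof. by have := ltn_ord x.1.1; rewrite /lvl; lia. Qed.

Lemma lvl_mk l r d : 0 < l < 4 -> lvl (mk l r d) = l.
Proof. by move=> Hl; rewrite /lvl /mk /= inordK; lia. Qed.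

Lemma code_inj : injective code.
Proof. exact: (pcan_inj pickleK). Qed.

Lemma below_lvl x y : below x y -> lvl x < lvl y.
Proof. by case/andP. Qed.

Lemma below_adjacent x y : (lvl x).+1 = lvl y -> below x y = link x y.
Proof. by move=> E; rewrite /below E ltnSn eqxx. Qed.

Lemma below_far x y : (lvl x).+2 = lvl y -> below x y.
Proof. by move=> E; rewrite /below -E ltnW // eqSS ltn_eqF. Qed.

Lemma link_new_below x l : link (mk l (rk x).+1 [:: code x]) x.
Proof. by rewrite /link /= ltnNge leqnSn mem_head. Qed.

Lemma lvl_cover x : 1 < lvl x -> exists2 b, lvl b = (lvl x).-1 & lower_cover below b x.
Proof.
move=> Hx; have := lvl_range x => /andP[_ Hx4].
exists (mk (lvl x).-1 (rk x).+1 [:: code x]); first by rewrite lvl_mk //; lia.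
split; first by rewrite below_adjacent ?link_new_below // lvl_mk //; lia.
by case=> c [/below_lvl + /below_lvl]; rewrite lvl_mk //; lia.
Qed.

Lemma level1E x : level below 1 x <-> lvl x = 1.
Proof.
split=> [Hx|Ex b /below_lvl]; last by rewrite Ex.
have := lvl_range x; case: (ltnP 1 (lvl x)) => [/lvl_cover [b _ [/Hx //]]|]; lia.
Qed.

Lemma level2E x : level below 2 x <-> lvl x = 2.
Proof.
split=> [[b [/level1E Eb [Hbx Hbetween]]]|Ex].
- have := below_lvl Hbx; have := lvl_range x; rewrite Eb => Hx Hbx'.
  case: (eqVneq (lvl x) 3) => [Ex|]; last by lia.
  pose N := (maxn (rk b) (rk x)).+1.
  have rkb : rk b < N by rewrite ltnS leq_maxl.
  have rkx : (N < rk x) = false by apply/negbTE; rewrite -leqNgt ltnW // ltnS leq_maxr.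
  case: Hbetween; exists (mk 2 N [:: code b; code x]); split.
  + by rewrite below_adjacent ?lvl_mk ?Eb // /link /= rkb mem_head.
  + by rewrite below_adjacent ?lvl_mk ?Ex // /link /= rkx !inE eqxx orbT.
- have [|b Eb Hbx] := lvl_cover (x := x); first by rewrite Ex.
  by exists b; split=> //; apply/level1E; rewrite Eb Ex.
Qed.

Lemma level3E x : level below 3 x <-> lvl x = 3.
Proof.
split=> [[b [/level2E Eb [Hbx _]]]|Ex].
- by have := below_lvl Hbx; have := lvl_range x; rewrite Eb; lia.
- have [|b Eb Hbx] := lvl_cover (x := x); first by rewrite Ex.
  by exists b; split=> //; apply/level2E; rewrite Eb Ex.
Qed.

Lemma levelE n x : level below n x <-> lvl x = n.
Proof.
case: n => [|[|[|[|n]]]]; [|exact: level1E|exact: level2E|exact: level3E|];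
  by split=> //; have := lvl_range x; lia.
Qed.

Lemma rk_sumn x (L : seq point) : List.In x L -> rk x <= sumn (map rk L).
Proof.
elim: L => [[]|y L IH] /= [<-|/IH Hx]; first exact: leq_addr.
exact: leq_trans Hx (leq_addl _ _).
Qed.

Lemma in_codes y (L : seq point) : (code y \in map code L) = (y \in L).
Proof. exact: (mem_map code_inj). Qed.

(* The new element lists exactly the elements it must be linked to. *)
Lemma below_extension : extension_property below.
Proof.
move=> n Xb Yb Xa Ya Z Hn HXY ndXY HXYa ndXYa _ _.
pose N := (sumn (map rk (Xb ++ Yb ++ Xa ++ Ya ++ Z))).+1.
have rkN x : List.In x (Xb ++ Yb ++ Xa ++ Ya ++ Z) -> rk x < N by move/rk_sumn.
pose z := mk n N (map code (Xb ++ Xa)).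
have lvlz : lvl z = n by rewrite lvl_mk.
have lvlb x : List.In x (Xb ++ Yb) -> lvl x = n.-1 by move/HXY/levelE.
have lvla x : List.In x (Xa ++ Ya) -> lvl x = n.+1 by move/HXYa/levelE.
have Hbelow x : List.In x (Xb ++ Yb) -> below x z = (x \in Xb ++ Xa).
  move=> Hx; rewrite below_adjacent ?lvlz ?lvlb //; last by lia.
  rewrite /link rkN ?in_codes //; move: Hx; rewrite !List.in_app_iff; tauto.
have Habove x : List.In x (Xa ++ Ya) -> below z x = (x \in Xb ++ Xa).
  move=> Hx; rewrite below_adjacent ?lvlz ?lvla //.
  rewrite /link ltnNge ltnW ?rkN ?in_codes //; move: Hx; rewrite !List.in_app_iff; tauto.
have notXa y : List.In y (Xb ++ Yb) -> y \notin Xa.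
  move=> Hy; apply/negP => /In_mem Hya.
  by have := lvlb _ Hy; rewrite lvla ?List.in_app_iff; [lia|left].
have notXb y : List.In y (Xa ++ Ya) -> y \notin Xb.
  move=> Hy; apply/negP => /In_mem Hyb.
  by have := lvla _ Hy; rewrite lvlb ?List.in_app_iff; [lia|left].
have zZ : ~ List.In z Z.
  move=> Hz; suff: rk z < N by rewrite ltnn.
  by apply: rkN; rewrite !List.in_app_iff; tauto.
exists z; split; first by apply/levelE.
split=> //.
split; [|split; [|split]] => x Hx.
- by rewrite Hbelow ?mem_cat; [apply/orP; left; apply/In_mem|apply/List.in_app_iff; left].
- rewrite Hbelow ?mem_cat ?(negbTE (notXa _ _)) ?orbF; try by apply/List.in_app_iff; right.
  by move=> /In_mem /(NoDup_cat_disjoint ndXY); apply.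
- by rewrite Habove ?mem_cat; [apply/orP; right; apply/In_mem|apply/List.in_app_iff; left].
- rewrite Habove ?mem_cat ?(negbTE (notXb _ _)) /=; try by apply/List.in_app_iff; right.
  by move=> /In_mem /(NoDup_cat_disjoint ndXYa); apply.
Qed.

Lemma point_structure : as_irr_structure below.
Proof.
split.
- exact: inhabits (mk 1 0 [::]).
- by move=> x /below_lvl; rewrite ltnn.
- move=> x y z /below_lvl Hxy /below_lvl Hyz; apply: below_far.
  by have := lvl_range x; have := lvl_range z; lia.
- pose b := mk 2 0 [::]; exists (mk 1 1 [:: code b]), b, (mk 3 1 [:: code b]).
  by split; rewrite below_adjacent ?lvl_mk // /link /= mem_head.
- move=> a b c d /below_lvl ? /below_lvl ? /below_lvl ?.
  by have := lvl_range a; have := lvl_range d; lia.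
- exact: below_extension.
Qed.

Section TwoModels.
Variables (M N : Type) (R : M -> M -> Prop) (S : N -> N -> Prop).
Hypotheses (HM : as_irr_structure R) (HN : as_irr_structure S).

Let partial_of_level_iso P : level_iso R S P -> partial_iso R S P.
Proof. by case. Qed.

Lemma models_equivalent p (v : nat -> M) (w : nat -> N) :
  sentence p -> (sat R v p <-> sat S w p).
Proof.
apply: (back_and_forth_sentence partial_of_level_iso) (level_iso_nil R S).
- by move=> P a; apply: level_iso_forth.
- by move=> P b; apply: level_iso_back.
- exact: level_iso_sub.
Qed.

Lemma models_isomorphic :
  countably_infinite M -> countably_infinite N -> isomorphic R S.
Proof.
move=> [fM [gM fMK _]] [fN [gN fNK _]].
apply: (back_and_forth_iso partial_of_level_iso _ _ (level_iso_nil R S)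
  (enumM := gM) (enumN := gN)).
- by move=> P a; apply: level_iso_forth.
- by move=> P b; apply: level_iso_back.
- by move=> x; exists (fM x).
- by move=> y; exists (fN y).
Qed.

End TwoModels.

(* A model contains [n.+1] distinct minimal elements, so it is not finite. *)
Lemma model_infinite (M : Type) (R : M -> M -> Prop) :
  as_irr_structure R -> ~ finite_type M.
Proof.
move=> HM [n [g Hg]]; have [s [Hs [nds _]]] := minimal_list HM n.+1.
have Hincl : List.incl s (map g (enum 'I_n)).
  by move=> x _; have [i <-] := Hg x; apply: List.in_map; apply/In_mem; rewrite mem_enum.
have : size s <= size (map g (enum 'I_n)) by apply/leP/(List.NoDup_incl_length nds Hincl).
by rewrite size_map size_enum_ord Hs ltnn.
Qed.

Lemma complete_of_equivalent (T : form -> Prop) :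
  (exists (M : Type) (R : M -> M -> Prop), is_model T R) ->
  (forall (M N : Type) (R : M -> M -> Prop) (S : N -> N -> Prop),
     is_model T R -> is_model T S ->
     forall p v w, sentence p -> (sat R v p <-> sat S w p)) ->
  complete T.
Proof.
move=> Hsat Hequiv; split=> // p Hp.
have [Hall|Hnot] := Classical_Prop.classic (entails T p); first by left.
right=> N S HN w Hw; apply: Hnot => M R HM v.
exact/(Hequiv _ _ _ _ HM HN p v w Hp).
Qed.

Theorem mainTheorem3 :
  aleph0_categorical T_as_irr /\ no_finite_models T_as_irr /\ complete T_as_irr.
Proof.
split; last split.
- by move=> M N R S /is_modelP HM /is_modelP HN; apply: models_isomorphic.
- by move=> M R /is_modelP; apply: model_infinite.
- apply: complete_of_equivalent.
  + by exists point, below; apply/is_modelP; exact: point_structure.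
  + by move=> M N R S /is_modelP HM /is_modelP HN p v w; apply: models_equivalent.
Qed.
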